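(* Let $\mathcal{A}$ be a finite-dimensional prebialgebra over $\mathbb{C}$ (unit $1_{\mathcal{A}}$, comultiplication $\Delta$, counit $\epsilon$), $\rho:\mathcal{A}\to M_{d_\rho}(\mathbb{C})$ a representation and $(v_{ij})_{1\le i,j\le d_v}$ a corepresentation. With a basis $B(\mathcal{A})$ and dual basis $\delta_x$, define $U^{ab}_{ij}=\rho_{ab}(v_{ij})$, $R^{yx}_{ab}=(\delta_y\otimes\rho_{ab})(\Delta(x))$, $V^{yx}_{ij}=\delta_y(xv_{ij})$, $u_x=\delta_x(1_{\mathcal{A}})$, $e_x=\epsilon(x)$. For $n\ge1$ define $$M_n(a_1,i_1,\dots,a_n,i_n;b_1,j_1,\dots,b_n,j_n)=\sum_{x_0,\dots,x_{2n}\in B(\mathcal{A})}e_{x_0}\prod_{m=1}^{n}\Big(R^{x_{2m-2}x_{2m-1}}_{a_mb_m}V^{x_{2m-1}x_{2m}}_{i_mj_m}\Big)u_{x_{2n}},$$ and define $T_n$ recursively by $T_1(a_1,i_1;b_1,j_1)=U^{a_1b_1}_{i_1j_1}$ and, for $n\ge2$, $$T_n(a_1,i_1,\dots,a_n,i_n;b_1,j_1,\dots,b_n,j_n)=\sum_{c_1,\dots,c_{n-1}}\sum_{k_2,\dots,k_n}T_{n-1}(a_1,i_2,a_2,i_3,\dots,a_{n-1},i_n;c_1,k_2,\dots,c_{n-1},k_n)\prod_{m=1}^nU^{c_mb_m}_{k_mj_m}$$ with $k_1:=i_1$, $c_n:=a_n$. Then $M_n=T_n$ for all $n\ge1$.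
   Context: A prebialgebra is a unital associative algebra and a coassociative counital coalgebra ($(\Delta\otimes\mathrm{id})\Delta=(\mathrm{id}\otimes\Delta)\Delta$, $(\epsilon\otimes\mathrm{id})\Delta=(\mathrm{id}\otimes\epsilon)\Delta=\mathrm{id}$) such that $\Delta(xy)=\Delta(x)\Delta(y)$; no compatibility of $\Delta$ with the unit or of $\epsilon$ with multiplication is assumed. A representation is a unital algebra homomorphism $\rho:\mathcal{A}\to M_{d_\rho}(\mathbb{C})$; a corepresentation is a matrix $(v_{ij})$ of elements of $\mathcal{A}$ with $\Delta(v_{ij})=\sum_kv_{ik}\otimes v_{kj}$ and $\epsilon(v_{ij})=\delta_{ij}$. $T_n$ is the contraction of a triangular brickwork network of $n(n+1)/2$ copies of $U$. *)

From mathcomp Require Import all_boot all_algebra.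
From mathcomp Require Import complex.
From mathcomp Require Import Rstruct.

Set Implicit Arguments.
Unset Strict Implicit.
Unset Printing Implicit Defensive.
Import GRing.Theory.
Local Open Scope ring_scope.

Definition CC : fieldType := (Rdefinitions.R)[i].

(** A finite-dimensional algebra/coalgebra over CC of dimension N, presented
    by structure constants in a fixed basis B(A) = {e_0, ..., e_(N-1)}
    (indexed by 'I_N).  An element of A is its coordinate vector 'I_N -> CC,
    i.e. the function y |-> delta_y(element).
      e_x e_y         = \sum_z  mulc x y z   e_z
      1_A             = \sum_x  unitc x      e_x
      Delta(e_x)      = \sum_{y,z} comulc x y z  e_y (x) e_z
      epsilon(e_x)    = counitc x                                           *)
Record alg_data (N : nat) := AlgData {
  mulc    : 'I_N -> 'I_N -> 'I_N -> CC;
  unitc   : 'I_N -> CC;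
  comulc  : 'I_N -> 'I_N -> 'I_N -> CC;
  counitc : 'I_N -> CC
}.

Section Prebialgebra.
Variables (N : nat) (P : alg_data N).

Definition elt := 'I_N -> CC.

Definition mulA (p q : elt) : elt :=
  fun z => \sum_(x < N) \sum_(y < N) p x * q y * mulc P x y z.

Definition basis (x : 'I_N) : elt := fun y => (x == y)%:R.

(** No compatibility of Delta with the unit nor of
    epsilon with the product is assumed. *)
Definition is_prebialgebra : Prop :=
  [/\
      (forall p q r : elt, mulA (mulA p q) r = mulA p (mulA q r)),
      (forall p : elt, mulA (unitc P) p = p /\ mulA p (unitc P) = p),
      (forall x y1 y2 y3 : 'I_N,
         \sum_(w < N) comulc P x w y3 * comulc P w y1 y2
         = \sum_(w < N) comulc P x y1 w * comulc P w y2 y3),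
      (forall x y : 'I_N,
         \sum_(w < N) comulc P x w y * counitc P w = (x == y)%:R /\
         \sum_(w < N) comulc P x y w * counitc P w = (x == y)%:R) &
      (forall x y p q : 'I_N,
         \sum_(z < N) mulc P x y z * comulc P z p q
         = \sum_(p1 < N) \sum_(p2 < N) \sum_(q1 < N) \sum_(q2 < N)
             comulc P x p1 q1 * comulc P y p2 q2
             * mulc P p1 p2 p * mulc P q1 q2 q)].

Definition rhoA d (rho : 'I_N -> 'M[CC]_d) (p : elt) : 'M[CC]_d :=
  \sum_(x < N) p x *: rho x.

Definition is_rep d (rho : 'I_N -> 'M[CC]_d) : Prop :=
  rhoA rho (unitc P) = 1%:M /\
  forall p q : elt, rhoA rho (mulA p q) = rhoA rho p *m rhoA rho q.

Definition is_corep dv (v : 'I_dv -> 'I_dv -> elt) : Prop :=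
  (forall (i j : 'I_dv) (y z : 'I_N),
     \sum_(x < N) v i j x * comulc P x y z
     = \sum_(k < dv) v i k y * v k j z) /\
  (forall i j : 'I_dv, \sum_(x < N) v i j x * counitc P x = (i == j)%:R).

Section Tensors.
Variables (d dv : nat) (rho : 'I_N -> 'M[CC]_d) (v : 'I_dv -> 'I_dv -> elt).

Definition Ut (a b : 'I_d) (i j : 'I_dv) : CC := rhoA rho (v i j) a b.
Definition Rt (y x : 'I_N) (a b : 'I_d) : CC :=
  \sum_(z < N) comulc P x y z * rho z a b.
Definition Vt (y x : 'I_N) (i j : 'I_dv) : CC := mulA (basis x) (v i j) y.
Definition ut (x : 'I_N) : CC := unitc P x.
Definition et (x : 'I_N) : CC := counitc P x.

(** M_n, with 0-based indices: argument m : 'I_n stands for the paper's m+1,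
    and x : 'I_(2n+1) -> B(A) is the tuple (x_0, ..., x_(2n)). *)
Definition Mn (n : nat) (a : 'I_n -> 'I_d) (i : 'I_n -> 'I_dv)
    (b : 'I_n -> 'I_d) (j : 'I_n -> 'I_dv) : CC :=
  \sum_(x : {ffun 'I_(n.*2).+1 -> 'I_N})
    et (x ord0) *
    (\prod_(m < n)
        (Rt (x (inord (m.*2))) (x (inord (m.*2).+1)) (a m) (b m) *
         Vt (x (inord (m.*2).+1)) (x (inord (m.*2).+2)) (i m) (j m))) *
    ut (x (inord (n.*2))).

(** T_(k+1) by recursion on k (index types 'I_k.+1, 0-based). *)
Fixpoint Tn (k : nat) : ('I_k.+1 -> 'I_d) -> ('I_k.+1 -> 'I_dv) ->
                        ('I_k.+1 -> 'I_d) -> ('I_k.+1 -> 'I_dv) -> CC :=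
  match k with
  | 0 => fun a i b j => Ut (a ord0) (b ord0) (i ord0) (j ord0)
  | k'.+1 => fun a i b j =>
      \sum_(c : {ffun 'I_k'.+1 -> 'I_d})
      \sum_(kk : {ffun 'I_k'.+1 -> 'I_dv})
        Tn (fun m => a (widen_ord (leqnSn _) m))   (* a_1 .. a_(n-1) *)
           (fun m => i (lift ord0 m))              (* i_2 .. i_n     *)
           c                                       (* c_1 .. c_(n-1) *)
           kk                                      (* k_2 .. k_n     *)
        * \prod_(m < k'.+2)
            Ut (match unlift ord_max m with Some m' => c m' | None => a ord_max end)
               (b m)
               (match unlift ord0 m with Some m' => kk m' | None => i ord0 end)
               (j m)
  end.

End Tensors.
End Prebialgebra.

(* In the basis of A write R_ab for the matrix of Phi_ab = (id (x) rho_ab) o Delta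
   and V_ij for that of right multiplication by v_ij, so that
   M_n = eps R_{a1b1} V_{i1j1} ... R_{anbn} V_{injn} 1.  Multiplicativity of
   Delta and of rho, together with Delta(v_ij) = \sum_k v_ik (x) v_kj, give the
   exchange relation
     R_ab V_ij = \sum_{c,k} U^{cb}_{kj} V_ik R_ac,
   and the counit gives eps R_ab V_ij = \sum_c U^{cb}_{ij} eps R_ac and
   eps R_ab 1 = delta_ab.  Pushing every R past its V turns a word of length n
   into a sum of words of length n - 1 weighted by one row of bricks, which is
   the recursion defining T_n. *)

From Pilot Require Import Defs.
From mathcomp Require Import all_boot all_algebra.
From mathcomp Require Import complex.
From mathcomp Require Import Rstruct.
From mathcomp Require Import ring zify.
From Stdlib Require Import FunctionalExtensionality Setoid Morphisms.
Set Implicit Arguments.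
Unset Strict Implicit.
Unset Printing Implicit Defensive.
Import GRing.Theory.
Local Open Scope ring_scope.

Definition consf (T : Type) (x : T) (g : nat -> T) : nat -> T :=
  fun l => if l is l'.+1 then g l' else x.

Lemma sum_mul_delta (R : pzSemiRingType) (I : finType) (i : I) (F : I -> R) :
  \sum_j F j * (i == j)%:R = F i.
Proof.
rewrite (bigD1 i) //= eqxx mulr1 big1 ?addr0 // => j.
by rewrite eq_sym => /negbTE ->; rewrite mulr0.
Qed.

Lemma sum_delta_mul (R : pzSemiRingType) (I : finType) (i : I) (F : I -> R) :
  \sum_j (i == j)%:R * F j = F i.
Proof.
rewrite (bigD1 i) //= eqxx mul1r big1 ?addr0 // => j.
by rewrite eq_sym => /negbTE ->; rewrite mul0r.
Qed.

Lemma unlift_max_match (X : Type) n (m : 'I_n.+1) (g : 'I_n -> X) (f : nat -> X) x :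
  g =1 f ->
  (if unlift ord_max m is Some m' then g m' else x) = if (m < n)%N then f m else x.
Proof.
move=> gf; case: unliftP => [m'|] ->; last by rewrite /= ltnn.
by rewrite gf lift_max ltn_ord.
Qed.

Lemma scalar_mx_sum (R : pzRingType) p (I : Type) (r : seq I) (P : pred I)
    (F : I -> R) :
  (\sum_(i <- r | P i) F i)%:M = \sum_(i <- r | P i) (F i)%:M :> 'M_p.
Proof. exact: (raddf_sum (@scalar_mx R p)). Qed.

(* [nsum t0 L F] sums [F g] over all [g : nat -> T] with [g l = t0] for
   [l >= L], i.e. over the tuples [(g 0, ..., g (L-1))]. *)
Fixpoint nsum (T : finType) (V : nmodType) (t0 : T) (L : nat)
    (F : (nat -> T) -> V) : V :=
  if L is L'.+1 then \sum_(x : T) nsum t0 L' (fun g => F (consf x g))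
  else F (fun _ => t0).

Section NSum.
Variables (T : finType) (t0 : T).

Lemma nsumS (V : nmodType) L (F : (nat -> T) -> V) :
  nsum t0 L.+1 F = \sum_(x : T) nsum t0 L (fun g => F (consf x g)).
Proof. by []. Qed.

Lemma eq_nsum (V : nmodType) L (F G : (nat -> T) -> V) :
  (forall g, F g = G g) -> nsum t0 L F = nsum t0 L G.
Proof.
elim: L F G => [|L IH] F G FG /=; first exact: FG.
by apply: eq_bigr => x _; apply: IH.
Qed.

Lemma raddf_nsum (V W : nmodType) (f : {additive V -> W}) L F :
  f (nsum t0 L F) = nsum t0 L (fun g => f (F g)).
Proof.
elim: L F => [|L IH] F //=.
by rewrite raddf_sum; apply: eq_bigr => x _; apply: IH.
Qed.

Lemma mulmx_nsumr (R : pzRingType) m p q (M : 'M[R]_(m, p)) L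
    (F : (nat -> T) -> 'M[R]_(p, q)) :
  M *m nsum t0 L F = nsum t0 L (fun g => M *m F g).
Proof. exact: (raddf_nsum (mulmx M)). Qed.

Lemma scaler_nsumr (R : pzRingType) (V : lmodType R) a L (F : (nat -> T) -> V) :
  a *: nsum t0 L F = nsum t0 L (fun g => a *: F g).
Proof. exact: (raddf_nsum ( *:%R a)). Qed.

Lemma nsum_sum (V : nmodType) (X : finType) L (F : X -> (nat -> T) -> V) :
  nsum t0 L (fun g => \sum_(x : X) F x g) = \sum_(x : X) nsum t0 L (F x).
Proof.
elim: L F => [|L IH] F //=.
by under eq_bigr do rewrite IH; rewrite exchange_big.
Qed.

Lemma sum_ffun_nsum (V : nmodType) L (G : {ffun 'I_L -> T} -> V) :
  \sum_(f : {ffun 'I_L -> T}) G f = nsum t0 L (fun g => G [ffun m : 'I_L => g m]).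
Proof.
elim: L G => [|L IH] G /=.
  rewrite (big_pred1 [ffun m : 'I_0 => t0]) // => f /=.
  by apply/esym/eqP/ffunP => -[].
pose fcons (x : T) (g : {ffun 'I_L -> T}) : {ffun 'I_L.+1 -> T} :=
  [ffun m => if unlift ord0 m is Some m' then g m' else x].
rewrite (reindex (fun p : T * {ffun 'I_L -> T} => fcons p.1 p.2)) /=; last first.
  exists (fun f : {ffun 'I_L.+1 -> T} => (f ord0, [ffun m => f (lift ord0 m)])).
    move=> [x g] _ /=; congr pair; first by rewrite ffunE unlift_none.
    by apply/ffunP => m; rewrite !ffunE liftK.
  move=> f _; apply/ffunP => m; rewrite !ffunE.
  by case: unliftP => [m'|] ->; rewrite ?ffunE.
rewrite -(pair_big xpredT xpredT (fun x g => G (fcons x g))) /=.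
apply: eq_bigr => x _; rewrite IH; apply: eq_nsum => g; congr G.
apply/ffunP => m; rewrite !ffunE.
by case: unliftP => [m'|] ->; rewrite ?ffunE ?lift0.
Qed.

End NSum.

Section BrickworkWord.
Variables (N d dv n : nat) (rho : 'I_N -> 'M[CC]_d) (v : 'I_dv -> 'I_dv -> elt N).
Variables (Rm : 'I_d -> 'I_d -> 'M[CC]_n) (Vm : 'I_dv -> 'I_dv -> 'M[CC]_n).
Variables (e : 'rV[CC]_n) (u : 'cV[CC]_n).
Local Notation U := (Ut rho v).

Fixpoint word (L : nat) (A B : nat -> 'I_d) (I J : nat -> 'I_dv) : 'cV[CC]_n :=
  if L is L'.+1 then
    Rm (A 0) (B 0) *m (Vm (I 0) (J 0) *m
      word L' (fun l => A l.+1) (fun l => B l.+1) (fun l => I l.+1) (fun l => J l.+1))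
  else u.

Lemma wordS L A B I J :
  word L.+1 A B I J =
  Rm (A 0) (B 0) *m (Vm (I 0) (J 0) *m
    word L (fun l => A l.+1) (fun l => B l.+1) (fun l => I l.+1) (fun l => J l.+1)).
Proof. by []. Qed.

Lemma word_paths (x0 : 'I_n) L : forall (f : 'rV_n) A B I J,
  (f *m word L A B I J) 0 0 =
  nsum x0 L.*2.+1 (fun X => f 0 (X 0) *
    (\prod_(m < L) (Rm (A m) (B m) (X m.*2) (X m.*2.+1) *
                    Vm (I m) (J m) (X m.*2.+1) (X m.*2.+2))) * u (X L.*2) 0).
Proof.
elim: L => [|L IH] f A B I J.
  by rewrite mxE; apply: eq_bigr => x _; rewrite big_ord0 mulr1.
have f_RV y : (f *m Rm (A 0) (B 0) *m Vm (I 0) (J 0)) 0 y =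
    \sum_x \sum_x1 f 0 x * Rm (A 0) (B 0) x x1 * Vm (I 0) (J 0) x1 y.
  rewrite mxE exchange_big; apply: eq_bigr => x1 _.
  by rewrite mxE mulr_suml.
rewrite wordS !mulmxA IH doubleS [RHS]nsumS.
under eq_bigr do rewrite nsumS -nsum_sum.
rewrite -nsum_sum; apply: eq_nsum => X.
rewrite f_RV -mulrA mulr_suml; apply: eq_bigr => x _.
rewrite mulr_suml; apply: eq_bigr => x1 _.
rewrite big_ord_recl /=; ring.
Qed.

Hypothesis Rm_Vm : forall a b i j,
  Rm a b *m Vm i j = \sum_c \sum_k U c b k j *: (Vm i k *m Rm a c).
Hypothesis Rm_Vm_u : forall a b i j,
  Rm a b *m (Vm i j *m u) = \sum_k U a b k j *: (Vm i k *m u).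
Hypothesis e_Rm_Vm : forall a b i j,
  e *m Rm a b *m Vm i j = \sum_c U c b i j *: (e *m Rm a c).
Hypothesis e_Rm_u : forall a b, e *m Rm a b *m u = (a == b)%:R%:M.

Lemma word_exchange (ta : 'I_d) (ti : 'I_dv) L : forall A B I J,
  word L.+1 A B I J =
  nsum ta L (fun C => nsum ti L.+1 (fun K =>
    (\prod_(l < L.+1) U (if (l < L)%N then C l else A L) (B l) (K l) (J l)) *:
    (Vm (I 0) (K 0) *m word L A C (fun l => I l.+1) (fun l => K l.+1)))).
Proof.
elim: L => [|L IH] A B I J.
  rewrite wordS Rm_Vm_u /=; apply: eq_bigr => k _.
  by rewrite big_ord1.
rewrite wordS mulmxA Rm_Vm IH mulmx_suml nsumS; apply: eq_bigr => c _.
rewrite mulmx_suml.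
under eq_bigr do rewrite -scalemxAl -mulmxA !mulmx_nsumr scaler_nsumr.
rewrite -nsum_sum; apply: eq_nsum => C.
rewrite [RHS]nsumS; apply: eq_bigr => k _.
rewrite !mulmx_nsumr scaler_nsumr; apply: eq_nsum => K.
rewrite -!scalemxAr scalerA [in RHS]big_ord_recl; congr (_ *: _).
Qed.

Lemma e_word_Tn (ta : 'I_d) (ti : 'I_dv) L : forall A B I J,
  e *m word L.+1 A B I J =
  (Tn rho v (fun m : 'I_L.+1 => A m) (fun m => I m) (fun m => B m) (fun m => J m))%:M.
Proof.
elim: L => [|L IH] A B I J.
  rewrite wordS !mulmxA e_Rm_Vm mulmx_suml /=.
  under eq_bigr do rewrite -scalemxAl e_Rm_u scale_scalar_mx.
  by rewrite -scalar_mx_sum sum_mul_delta.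
rewrite wordS (word_exchange ta ti) !mulmxA e_Rm_Vm mulmx_suml.
rewrite [Tn _ _ _ _ _ _]/= scalar_mx_sum (sum_ffun_nsum ta) nsumS.
apply: eq_bigr => c _.
rewrite -scalemxAl mulmx_nsumr scaler_nsumr; apply: eq_nsum => C.
rewrite scalar_mx_sum (sum_ffun_nsum ti) mulmx_nsumr scaler_nsumr.
apply: eq_nsum => K.
rewrite -scalemxAr scalerA -!mulmxA (IH A (consf c C) (fun l => I l.+1) K).
rewrite scale_scalar_mx mulrC; congr (_%:M); congr (_ * _).
  by congr Tn; apply: functional_extensionality => m; rewrite ffunE.
have Cc : [ffun m : 'I_L.+1 => consf c C m] =1 consf c C by move=> m; rewrite ffunE.
rewrite [RHS]big_ord_recl (unlift_max_match _ _ Cc) unlift_none /=; congr (_ * _).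
apply: eq_bigr => l _.
by rewrite (unlift_max_match _ _ Cc) liftK ffunE lift0.
Qed.
End BrickworkWord.

(* Lets [setoid_rewrite] act under the binder of a big operator. *)
#[local] Instance bigop_body_proper (R I : Type) (idx : R) (r : seq I) :
  Proper (pointwise_relation I eq ==> eq) (@bigop.body R I idx r).
Proof. by move=> F G FG; congr bigop.body; apply: functional_extensionality. Qed.

Ltac distribute := repeat (setoid_rewrite mulr_suml || setoid_rewrite mulr_sumr).

Lemma exchange_big4 (V : nmodType) (I1 I2 I3 I4 I5 : finType)
    (F : I1 -> I2 -> I3 -> I4 -> I5 -> V) :
  \sum_(i1 : I1) \sum_(i2 : I2) \sum_(i3 : I3) \sum_(i4 : I4) \sum_(i5 : I5)
    F i1 i2 i3 i4 i5 =
  \sum_(i2 : I2) \sum_(i3 : I3) \sum_(i4 : I4) \sum_(i5 : I5) \sum_(i1 : I1)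
    F i1 i2 i3 i4 i5.
Proof.
rewrite exchange_big; apply: eq_bigr => i2 _; rewrite exchange_big.
apply: eq_bigr => i3 _; rewrite exchange_big; apply: eq_bigr => i4 _.
exact: exchange_big.
Qed.

Section PrebialgebraMatrices.
Variables (N d dv : nat) (P : alg_data N) (rho : 'I_N -> 'M[CC]_d).
Variable (v : 'I_dv -> 'I_dv -> elt N).
Local Notation U := (Ut rho v).

(* [Rmx a b], [Vmx i j] are the paper's [R_ab = (R^{yx}_{ab})_{y,x}] and
   [V_ij = (V^{yx}_{ij})_{y,x}]; [rmulmx w] is right multiplication by [e_w]. *)
Definition Rmx (a b : 'I_d) : 'M[CC]_N := \matrix_(y, x) Rt P rho y x a b.
Definition Vmx (i j : 'I_dv) : 'M[CC]_N := \matrix_(y, x) Vt P v y x i j.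
Definition rmulmx (w : 'I_N) : 'M[CC]_N := \matrix_(y, x) Defs.mulc P x w y.
Definition erow : 'rV[CC]_N := \row_x et P x.
Definition ucol : 'cV[CC]_N := \col_x ut P x.
Definition colv (p : elt N) : 'cV[CC]_N := \col_y p y.

Lemma rhoA_entry (p : elt N) a b : rhoA rho p a b = \sum_x p x * rho x a b.
Proof. by rewrite summxE; apply: eq_bigr => x _; rewrite mxE. Qed.

Lemma rhoA_basis x : rhoA rho (Defs.basis x) = rho x.
Proof.
apply/matrixP => a b; rewrite rhoA_entry.
exact: (sum_delta_mul x (fun y => rho y a b)).
Qed.

Lemma mulA_basisl x (q : elt N) z :
  Defs.mulA P (Defs.basis x) q z = \sum_y q y * Defs.mulc P x y z.
Proof.
rewrite /Defs.mulA -(sum_delta_mul x (fun x' => \sum_y q y * Defs.mulc P x' y z)).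
apply: eq_bigr => x' _.
by rewrite mulr_sumr; apply: eq_bigr => y _; rewrite mulrA.
Qed.

Lemma Vmx_rmulmx i j : Vmx i j = \sum_w v i j w *: rmulmx w.
Proof.
apply/matrixP => y x; rewrite !mxE summxE /Vt mulA_basisl.
by apply: eq_bigr => w _; rewrite !mxE.
Qed.

Lemma Mn_word (x0 : 'I_N) k (a b : 'I_k.+1 -> 'I_d) (i j : 'I_k.+1 -> 'I_dv) :
  Mn P rho v a i b j =
  (erow *m word Rmx Vmx ucol k.+1 (fun l => a (inord l)) (fun l => b (inord l))
                                  (fun l => i (inord l)) (fun l => j (inord l))) 0 0.
Proof.
rewrite /Mn (sum_ffun_nsum x0) (word_paths _ _ _ x0); apply: eq_nsum => X.
rewrite !ffunE inordK; last by rewrite -!muln2; lia.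
rewrite !mxE; congr (_ * _ * _); apply: eq_bigr => m _.
have m_lt := ltn_ord m.
by rewrite !ffunE !inordK ?inord_val ?mxE //; rewrite -!muln2; lia.
Qed.

Hypotheses (HP : is_prebialgebra P) (Hrho : is_rep P rho) (Hv : is_corep P v).

Lemma rho_mulc x y a b :
  \sum_z Defs.mulc P x y z * rho z a b = \sum_c rho x a c * rho y c b.
Proof.
have [_ rhoM] := Hrho.
have := congr1 (fun M : 'M_d => M a b) (rhoM (Defs.basis x) (Defs.basis y)).
rewrite /= !rhoA_basis rhoA_entry mxE => <-.
by apply: eq_bigr => z _; rewrite mulA_basisl /Defs.basis sum_delta_mul.
Qed.

Lemma Vmx_ucol i j : Vmx i j *m ucol = colv (v i j).
Proof.
have [_ unitA _ _ _] := HP.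
apply/matrixP => y k; rewrite ord1 !mxE -(unitA (v i j)).1 [RHS]/Defs.mulA.
apply: eq_bigr => x _; rewrite !mxE /Vt mulA_basisl mulr_suml.
by apply: eq_bigr => w _; rewrite /ut; ring.
Qed.

Lemma Rmx_corep a b i j :
  Rmx a b *m colv (v i j) = \sum_k U a b k j *: colv (v i k).
Proof.
have [v_comul _] := Hv.
apply/matrixP => y l; rewrite ord1 !mxE summxE.
transitivity (\sum_z rho z a b * \sum_x v i j x * comulc P x y z).
  under eq_bigr do rewrite !mxE /Rt mulr_suml.
  rewrite exchange_big; apply: eq_bigr => z _; rewrite mulr_sumr.
  by apply: eq_bigr => x _; ring.
under eq_bigr do rewrite v_comul mulr_sumr.
rewrite exchange_big; apply: eq_bigr => k _.
rewrite !mxE /Ut rhoA_entry mulr_suml; apply: eq_bigr => z _; ring.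
Qed.

Lemma Rt_mulc a b x w y :
  \sum_z Rt P rho y z a b * Defs.mulc P x w z =
  \sum_c \sum_p1 \sum_p2
    Rt P rho p1 x a c * Rt P rho p2 w c b * Defs.mulc P p1 p2 y.
Proof.
have [_ _ _ _ comulM] := HP.
transitivity (\sum_s rho s a b * \sum_z Defs.mulc P x w z * comulc P z y s).
  rewrite /Rt; distribute; rewrite exchange_big.
  by apply: eq_bigr => s _; apply: eq_bigr => z _; ring.
under eq_bigr do rewrite comulM.
rewrite /Rt; distribute; rewrite exchange_big4 [RHS]exchange_big4.
apply: eq_bigr => p1 _; apply: eq_bigr => p2 _; apply: eq_bigr => q1 _.
apply: eq_bigr => q2 _.
transitivity (comulc P x p1 q1 * comulc P w p2 q2 * Defs.mulc P p1 p2 y *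
              \sum_s Defs.mulc P q1 q2 s * rho s a b).
  by rewrite mulr_sumr; apply: eq_bigr => s _; ring.
by rewrite rho_mulc mulr_sumr; apply: eq_bigr => c _; ring.
Qed.

Lemma Rmx_rmulmx a b w :
  Rmx a b *m rmulmx w = \sum_c \sum_p Rmx c b p w *: (rmulmx p *m Rmx a c).
Proof.
apply/matrixP => y x; rewrite !mxE.
under eq_bigr do rewrite !mxE.
rewrite Rt_mulc summxE; apply: eq_bigr => c _.
rewrite summxE exchange_big; apply: eq_bigr => p _.
rewrite !mxE mulr_sumr; apply: eq_bigr => t _.
by rewrite !mxE; ring.
Qed.

Lemma Rmx_Vmx a b i j :
  Rmx a b *m Vmx i j = \sum_c \sum_k U c b k j *: (Vmx i k *m Rmx a c).
Proof.
have coef c p : \sum_w Rmx c b p w * v i j w = \sum_k U c b k j * v i k p.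
  transitivity ((Rmx c b *m colv (v i j)) p 0).
    by rewrite mxE; apply: eq_bigr => w _; rewrite !mxE.
  by rewrite Rmx_corep summxE; apply: eq_bigr => k _; rewrite !mxE.
transitivity (\sum_c \sum_p (\sum_w Rmx c b p w * v i j w) *: (rmulmx p *m Rmx a c)).
  rewrite Vmx_rmulmx mulmx_sumr.
  under eq_bigr do rewrite -scalemxAr Rmx_rmulmx scaler_sumr.
  rewrite exchange_big; apply: eq_bigr => c _.
  under eq_bigr do rewrite scaler_sumr.
  rewrite exchange_big; apply: eq_bigr => p _.
  by rewrite scaler_suml; apply: eq_bigr => w _; rewrite scalerA mulrC.
apply: eq_bigr => c _.
under [RHS]eq_bigr do rewrite Vmx_rmulmx mulmx_suml scaler_sumr.
rewrite exchange_big; apply: eq_bigr => p _.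
rewrite coef scaler_suml; apply: eq_bigr => k _.
by rewrite -scalemxAl scalerA.
Qed.

Lemma Rmx_Vmx_ucol a b i j :
  Rmx a b *m (Vmx i j *m ucol) = \sum_k U a b k j *: (Vmx i k *m ucol).
Proof.
by rewrite Vmx_ucol Rmx_corep; apply: eq_bigr => k _; rewrite Vmx_ucol.
Qed.

Lemma erow_Rmx a b : erow *m Rmx a b = \row_x rho x a b.
Proof.
have [_ _ _ counit _] := HP.
apply/matrixP => l x; rewrite ord1 !mxE.
under eq_bigr do rewrite !mxE /Rt mulr_sumr.
rewrite exchange_big -[RHS](sum_delta_mul x (fun z => rho z a b)).
apply: eq_bigr => z _; rewrite -(counit x z).1 mulr_suml.
by apply: eq_bigr => y _; rewrite /et; ring.
Qed.

Lemma erow_Rmx_Vmx a b i j :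
  erow *m Rmx a b *m Vmx i j = \sum_c U c b i j *: (erow *m Rmx a c).
Proof.
have [_ rhoM] := Hrho.
apply/matrixP => l x; rewrite ord1 !erow_Rmx !mxE summxE.
transitivity (rhoA rho (Defs.mulA P (Defs.basis x) (v i j)) a b).
  by rewrite rhoA_entry; apply: eq_bigr => y _; rewrite !mxE mulrC.
rewrite rhoM rhoA_basis mxE; apply: eq_bigr => c _.
by rewrite erow_Rmx !mxE mulrC.
Qed.

Lemma erow_Rmx_ucol a b : erow *m Rmx a b *m ucol = (a == b)%:R%:M.
Proof.
have [rho1 _] := Hrho.
apply/matrixP => l k; rewrite !ord1 erow_Rmx !mxE eqxx mulr1n.
transitivity (rhoA rho (unitc P) a b); last by rewrite rho1 mxE.
by rewrite rhoA_entry; apply: eq_bigr => x _; rewrite !mxE mulrC.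
Qed.

End PrebialgebraMatrices.

Lemma rep_dim_gt0 N (P : alg_data N) d (rho : 'I_N -> 'M[CC]_d) :
  is_rep P rho -> (0 < d)%N -> (0 < N)%N.
Proof.
case: N P rho => [|N] // P rho [rho1 _]; case: d rho rho1 => [|d] // rho.
move/(congr1 (fun M : 'M_d.+1 => M 0 0)); rewrite /rhoA big_ord0 !mxE eqxx /=.
by move/eqP; rewrite eq_sym oner_eq0.
Qed.

Theorem mainTheorem3
  (N : nat) (P : alg_data N) (HP : is_prebialgebra P)
  (d : nat) (rho : 'I_N -> 'M[CC]_d) (Hrho : is_rep P rho)
  (dv : nat) (v : 'I_dv -> 'I_dv -> elt N) (Hv : is_corep P v)
  (k : nat) (a : 'I_k.+1 -> 'I_d) (i : 'I_k.+1 -> 'I_dv)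
  (b : 'I_k.+1 -> 'I_d) (j : 'I_k.+1 -> 'I_dv) :
  Mn P rho v a i b j = Tn rho v a i b j.
Proof.
have N_gt0 := rep_dim_gt0 Hrho (leq_ltn_trans (leq0n _) (ltn_ord (a ord0))).
rewrite (Mn_word P rho v (Ordinal N_gt0)).
rewrite (e_word_Tn (Rmx_Vmx HP Hrho Hv) (Rmx_Vmx_ucol rho HP Hv)
                   (erow_Rmx_Vmx v HP Hrho) (erow_Rmx_ucol HP Hrho) (a ord0) (i ord0)).
rewrite mxE eqxx mulr1n.
have inord_fun (T : Type) (f : 'I_k.+1 -> T) : (fun m : 'I_k.+1 => f (inord m)) = f.
  by apply: functional_extensionality => m; rewrite inord_val.
by rewrite !inord_fun.
Qed.
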